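(* Let $F$ be a connected graph and $Q$ a connected chordal graph. Let $\mu:V(F)\to V(Q)$ be a function such that for every induced path $p_1\cdots p_m$ in $F$ of length at most two, the vertices $\mu(p_1),\ldots,\mu(p_m)$ are pairwise distinct and $\mu(p_1)\cdots\mu(p_m)$ is an induced path of $Q$. Then $\mu$ is injective and preserves the adjacency relation, i.e. for all $v,w\in V(F)$, $vw\in E(F)$ if and only if $\mu(v)\mu(w)\in E(Q)$.
   Context: A graph is chordal if it has no induced cycle of length at least $4$. The length of a path is its number of edges. *)

From mathcomp Require Import all_boot.
Set Implicit Arguments. Unset Strict Implicit. Unset Printing Implicit Defensive.

Definition simple_graph (T : finType) (e : rel T) : Prop :=
  symmetric e /\ irreflexive e.

Definition connected_graph (T : finType) (e : rel T) : Prop :=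
  forall x y : T, connect e x y.

(* s = p_1 ... p_m (m >= 1) is an induced path: the vertices are pairwise
   distinct and p_i p_j is an edge iff |i - j| = 1.  Its length is m - 1. *)
Definition induced_path (T : finType) (e : rel T) (s : seq T) : Prop :=
  0 < size s /\ uniq s /\
  forall (x0 : T) (i j : nat), i < size s -> j < size s ->
    e (nth x0 s i) (nth x0 s j) = ((j == i.+1) || (i == j.+1)).

Definition induced_cycle (T : finType) (e : rel T) (s : seq T) : Prop :=
  2 < size s /\ uniq s /\
  forall (x0 : T) (i j : nat), i < size s -> j < size s ->
    e (nth x0 s i) (nth x0 s j) =
      ((j == i.+1 %% size s) || (i == j.+1 %% size s)).

Definition chordal (T : finType) (e : rel T) : Prop :=
  forall s : seq T, induced_cycle e s -> size s < 4.

From mathcomp Require Import all_boot zify.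

Set Implicit Arguments.
Unset Strict Implicit.
Unset Printing Implicit Defensive.

(* Join v to w by a walk of F and shortcut it until every three consecutive
   vertices induce a path.  The hypothesis on mu maps each such window to an
   induced path of Q, so the image walk is locally induced as well.  In a chordal
   graph a locally induced walk is an induced path: by induction its prefix and
   suffix are, equal endpoints would then force length 2, and a chord between
   the endpoints would close an induced cycle of length at least 4.  Hence
   mu v <> mu w when v <> w, and mu v, mu w are adjacent iff the walk has length
   1; as mu maps edges to edges, this happens iff v, w are adjacent. *)

Section Walks.
Variables (T : finType) (e : rel T).

Definition walk (g : nat -> T) (k : nat) := forall t, t < k -> e (g t) (g t.+1).

Definition locally_induced (g : nat -> T) (k : nat) :=
  forall t, t.+2 <= k -> g t != g t.+2 /\ ~~ e (g t) (g t.+2).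

Lemma connect_walk v w :
  connect e v w -> exists k g, [/\ walk g k, g 0 = v & g k = w].
Proof.
case/connectP=> p vp ->; exists (size p), (nth v (v :: p)).
by split=> //; [move=> t; apply: (pathP v vp) | rewrite (last_nth v)].
Qed.

Definition skip (t m : nat) (g : nat -> T) (s : nat) :=
  if s <= t then g s else g (s + m).

Lemma walk_skip g k t m :
  walk g k -> (t + m < k -> e (g t) (g (t + m).+1)) -> walk (skip t m g) (k - m).
Proof.
move=> gw short s; rewrite /skip.
case: (ltngtP s t) => [st|ts|->] sk.
- by apply: gw; lia.
- by rewrite addSn; apply: gw; lia.
- by rewrite addSn; apply: short; lia.
Qed.

Lemma locally_induced_walk_exists g k : walk g k ->
  exists k' g', [/\ walk g' k', locally_induced g' k', g' 0 = g 0 & g' k' = g k].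
Proof.
elim/ltn_ind: k g => k IH g gw.
pose bad t := (g t == g t.+2) || e (g t) (g t.+2).
have [/hasP[t]|/hasPn good] := boolP (has bad (iota 0 k.-1)); last first.
  exists k, g; split=> // t tk; have := good t.
  by rewrite mem_iota /bad negb_or => /(_ ltac:(lia))/andP.
rewrite mem_iota /bad => /andP[_ tk] /orP[/eqP loop|chord].
- have g'w : walk (skip t 2 g) (k - 2).
    by apply: walk_skip => // tk2; rewrite loop -addn2; apply: gw; lia.
  have [k' [g' [g'_walk g'_li g'0 g'k]]] := IH (k - 2) ltac:(lia) _ g'w.
  exists k', g'; split=> //; rewrite g'k /skip; case: leqP => tk2.
    have -> : k - 2 = t by lia.
    by rewrite loop; congr g; lia.
  by congr g; lia.
- have g'w : walk (skip t 1 g) (k - 1).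
    by apply: walk_skip => // _; rewrite addn1.
  have [k' [g' [g'_walk g'_li g'0 g'k]]] := IH (k - 1) ltac:(lia) _ g'w.
  exists k', g'; split=> //; rewrite g'k /skip; case: leqP => tk1; first lia.
  by congr g; lia.
Qed.

End Walks.

Lemma modn_succ i n : i < n -> i.+1 %% n = (if i.+1 == n then 0 else i.+1).
Proof.
by move=> lt_in; case: eqP => [->|ne]; [rewrite modnn | rewrite modn_small //; lia].
Qed.

Definition path_adj (i j : nat) := (j == i.+1) || (i == j.+1).

Definition cycle_adj (n i j : nat) := (j == i.+1 %% n) || (i == j.+1 %% n).

Lemma cycle_adj_lt n i j :
  i < j < n -> cycle_adj n i j = (j == i.+1) || (i == 0) && (j == n.-1).
Proof.
move=> ijn; rewrite /cycle_adj !modn_succ; try lia.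
by case: ifP; case: ifP => *; apply/idP/idP; lia.
Qed.

Section SimpleGraph.
Variables (T : finType) (e : rel T).
Hypotheses (e_sym : symmetric e) (e_irr : irreflexive e).

Definition induces (R : nat -> nat -> bool) (g : nat -> T) (n : nat) :=
  forall i j, i < j < n -> g i != g j /\ e (g i) (g j) = R i j.

Lemma induces_mkseq R g n :
  (forall i j, R i j = R j i) -> (forall i, i < n -> R i i = false) ->
  induces R g n ->
  uniq (mkseq g n) /\ forall x0 i j, i < n -> j < n ->
    e (nth x0 (mkseq g n) i) (nth x0 (mkseq g n) j) = R i j.
Proof.
move=> R_sym R_irr gR; split.
  apply/mkseq_uniqP=> i j; rewrite !inE => i_n j_n gij.
  by case: (ltngtP i j) => // [ij|ji]; [case: (gR i j) | case: (gR j i)];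
    rewrite ?gij ?eqxx //; lia.
move=> x0 i j i_n j_n; rewrite !nth_mkseq //.
wlog ij : i j i_n j_n / i <= j.
  by move=> gen; case: (leqP i j) => [|/ltnW] ij; last rewrite e_sym R_sym; apply: gen.
case: (ltngtP i j) ij => // [ij _|<- _]; last by rewrite e_irr R_irr.
by case: (gR i j) => //; lia.
Qed.

Lemma induced_path_mkseq g n :
  0 < n -> induced_path e (mkseq g n) <-> induces path_adj g n.
Proof.
move=> n_gt0; split.
  case=> _ [g_uniq g_adj] i j ijn; split.
    by apply/eqP => /(mkseq_uniqP _ _ g_uniq); rewrite !inE => gij; have := gij _ _; lia.
  by have := g_adj (g 0) i j; rewrite size_mkseq !nth_mkseq; try lia; apply; lia.
move=> g_adj; have [] := induces_mkseq _ _ g_adj.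
- by move=> i j; rewrite /path_adj orbC.
- by move=> i _; apply/negbTE; rewrite /path_adj; lia.
by rewrite /induced_path size_mkseq.
Qed.

Lemma induced_cycle_mkseq g n :
  induces (cycle_adj n) g n -> 2 < n -> induced_cycle e (mkseq g n).
Proof.
move=> g_adj n_gt2; have [] := induces_mkseq _ _ g_adj.
- by move=> i j; rewrite /cycle_adj orbC.
- move=> i i_n; rewrite /cycle_adj orbb modn_succ //.
  by case: ifP => *; apply/negbTE; lia.
by rewrite /induced_cycle size_mkseq.
Qed.

Lemma locally_induced_walk_windows g k :
  walk e g k /\ locally_induced e g k <->
  forall t n, 0 < n <= 3 -> t + n <= k.+1 -> induces path_adj (fun s => g (t + s)) n.
Proof.
split=> [[g_walk g_li] t n n3 tnk i j ijn|windows].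
  have [ji|j2] := eqVneq j i.+1.
    have step : e (g (t + i)) (g (t + i).+1) by apply: g_walk; lia.
    rewrite ji /path_adj eqxx addnS step; split=> //.
    by apply: contraTneq step => ->; rewrite e_irr.
  have [-> ->] : i = 0 /\ j = 2 by lia.
  have [neq nadj] : g t != g t.+2 /\ ~~ e (g t) (g t.+2) by apply: g_li; lia.
  by rewrite addn0 addn2 /path_adj /= neq (negbTE nadj).
split=> [t tk|t tk].
  by have [_] := windows t 2 isT ltac:(lia) 0 1 isT; rewrite addn0 addn1 => ->.
have [neq adj] := windows t 3 isT ltac:(lia) 0 2 isT.
by rewrite addn0 addn2 in neq adj; rewrite neq adj.
Qed.

Hypothesis e_chordal : chordal e.

Lemma locally_induced_walk_path g k :
  walk e g k -> locally_induced e g k -> induces path_adj g k.+1.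
Proof.
elim: k g => [|k IH] g g_walk g_li; first by move=> i j; lia.
have prefix := IH g (fun t tk => g_walk t (ltnW tk)) (fun t tk => g_li t (ltnW tk)).
have suffix := IH (fun t => g t.+1) (fun t => g_walk t.+1) (fun t => g_li t.+1).
have inner i j : i < j <= k.+1 -> (0 < i) || (j <= k) ->
    g i != g j /\ e (g i) (g j) = path_adj i j.
  case: i => [|i] ij /= jk; first by apply: (prefix 0 j); lia.
  have [neq adj] := suffix i j.-1 ltac:(lia); rewrite prednK in neq adj; last lia.
  by rewrite neq adj /path_adj; split=> //; apply/idP/idP; lia.
have ends_neq : g 0 != g k.+1.
  apply/eqP=> loop; have [k0|k_gt0] := posnP k.
    by have := g_walk 0 isT; rewrite loop k0 e_irr.
  have [_] := inner 0 k ltac:(lia) ltac:(lia).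
  rewrite loop e_sym g_walk // /path_adj /= orbF => /esym/eqP k1.
  by have [] := g_li 0 ltac:(lia); rewrite loop k1 eqxx.
have ends_adj : e (g 0) (g k.+1) = (k == 0).
  case: (ltngtP k 1) => [k0|k2|k1].
  - have -> : k = 0 by lia.
    by rewrite g_walk.
  - have -> : (k == 0) = false by apply/negbTE; lia.
    apply/negbTE/negP=> chord.
    suff cyc : induces (cycle_adj k.+2) g k.+2.
      by have := e_chordal (induced_cycle_mkseq cyc (ltnW k2)); rewrite size_mkseq; lia.
    move=> i j ijk; rewrite cycle_adj_lt //.
    have [inside|outside] := boolP ((0 < i) || (j <= k)).
      have [-> ->] := inner i j ltac:(lia) inside.
      by split=> //; rewrite /path_adj; apply/idP/idP; lia.
    have [-> ->] : i = 0 /\ j = k.+1 by lia.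
    by rewrite chord ends_neq /= eqxx orbT.
  - by rewrite k1; have [_ /negbTE ->] := g_li 0 ltac:(lia).
move=> i j ijk; have [inside|outside] := boolP ((0 < i) || (j <= k)).
  by apply: inner inside; lia.
have [-> ->] : i = 0 /\ j = k.+1 by lia.
by rewrite ends_neq ends_adj /path_adj /= orbF.
Qed.

End SimpleGraph.

Section LocallyInducedMap.
Variables (TF TQ : finType) (eF : rel TF) (eQ : rel TQ) (mu : TF -> TQ).
Hypotheses (eF_sym : symmetric eF) (eF_irr : irreflexive eF).
Hypotheses (eQ_sym : symmetric eQ) (eQ_irr : irreflexive eQ) (eQ_chordal : chordal eQ).
Hypothesis mu_short_paths : forall s : seq TF, induced_path eF s -> size s <= 3 ->
  uniq (map mu s) /\ induced_path eQ (map mu s).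

Lemma map_window h n :
  induces eF path_adj h n -> 0 < n <= 3 -> induces eQ path_adj (mu \o h) n.
Proof.
move=> h_adj /andP[n_gt0 n3].
have /(induced_path_mkseq eF_sym eF_irr _ n_gt0) hF := h_adj.
apply/(induced_path_mkseq eQ_sym eQ_irr _ n_gt0).
by rewrite /mkseq map_comp; apply: (mu_short_paths hF _).2; rewrite size_map size_iota.
Qed.

Lemma map_edge v w : eF v w -> eQ (mu v) (mu w).
Proof.
move=> vw; pose h s := if s is 0 then v else w.
have h_walk : walk eF h 1 /\ locally_induced eF h 1 by split=> [[]|].
have /(locally_induced_walk_windows eF_irr) windows := h_walk.
have hQ := map_window (windows 0 2 isT isT) isT.
by have [_ ->] := hQ 0 1 isT.
Qed.

Lemma map_locally_induced_walk g k : walk eF g k -> locally_induced eF g k ->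
  induces eQ path_adj (mu \o g) k.+1.
Proof.
move=> g_walk g_li.
have /(locally_induced_walk_windows eF_irr) windows := conj g_walk g_li.
have [Q_walk Q_li] : walk eQ (mu \o g) k /\ locally_induced eQ (mu \o g) k.
  apply/(locally_induced_walk_windows eQ_irr) => t n n_range tn.
  by have := map_window (windows t n n_range tn) n_range.
exact: locally_induced_walk_path Q_walk Q_li.
Qed.

End LocallyInducedMap.

Theorem lemma3p2 (TF TQ : finType) (eF : rel TF) (eQ : rel TQ)
  (sF : simple_graph eF) (sQ : simple_graph eQ)
  (cF : connected_graph eF) (cQ : connected_graph eQ) (chQ : chordal eQ)
  (mu : TF -> TQ)
  (Hmu : forall s : seq TF, induced_path eF s -> size s <= 3 ->
           uniq (map mu s) /\ induced_path eQ (map mu s)) :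
  injective mu /\ (forall v w : TF, eF v w = eQ (mu v) (mu w)).
Proof.
have [symF irrF] := sF; have [symQ irrQ] := sQ.
have image_path v w : exists k g,
    [/\ walk eF g k, induces eQ path_adj (mu \o g) k.+1, g 0 = v & g k = w].
  have [k [g [g_walk <- <-]]] := connect_walk (cF v w).
  have [k' [g' [g'_walk g'_li <- <-]]] := locally_induced_walk_exists g_walk.
  by exists k', g'; split=> //; apply: map_locally_induced_walk.
split=> v w.
  have [k [g [_ gQ <- <-]]] := image_path v w.
  have [-> //|k_gt0] := posnP k.
  by have [/eqP] := gQ 0 k ltac:(lia).
have [k [g [g_walk gQ <- <-]]] := image_path v w.
have [->|k_gt0] := posnP k; first by rewrite irrF irrQ.
have [_ adjQ] := gQ 0 k ltac:(lia); rewrite adjQ /path_adj /= orbF.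
have [k1|k_ne1] := eqVneq k 1; first by rewrite k1 g_walk.
apply/negbTE/negP => /(map_edge symF irrF symQ irrQ Hmu) edgeQ.
by move: adjQ; rewrite /= edgeQ /path_adj /= orbF (negbTE k_ne1).
Qed.
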